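(* Let $\mathbf D$ be a set of tilings containing both $\emptyset$ and $\Lambda$ (a normal super-domain). Then $\mathbf D$ is a clique (its elements are pairwise compatible) if and only if $\mathbf D$ is a Condorcet super-domain.
   Context: Fix an integer $n\ge 3$ and write $[n]=\{1,\dots,n\}$. Let $\Lambda$ be the set of 3-element subsets of $[n]$; a triple $\{i,j,k\}$ with $i<j<k$ is written $ijk$. For a 4-element subset $F=\{i<j<k<l\}$ of $[n]$, the stick of $F$ is the sequence $(ijk,\ ijl,\ ikl,\ jkl)$. A tiling (the inversion set of a rhombus tiling of the zonogon $Z(n;2)$) is a subset $T\subseteq\Lambda$ such that for every 4-element $F\subseteq[n]$, $T\cap\mathrm{stick}(F)$ is an initial segment or a final segment of the stick (empty set and whole stick allowed). Two tilings $T,T'$ are compatible if both $T\cap T'$ and $T\cup T'$ are tilings. For a finite set $V$ of odd cardinality and tilings $(T_v)_{v\in V}$, $sm((T_v)_{v\in V})$ is the set of triples lying in $T_v$ for more than $|V|/2$ indices $v$. A set $\mathbf D$ of tilings is a Condorcet super-domain if for every finite $V$ of odd cardinality and every family $(T_v)_{v\in V}$ with all $T_v\in\mathbf D$, $sm((T_v)_{v\in V})$ is a tiling. *)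

From mathcomp Require Import all_boot.
Set Implicit Arguments. Unset Strict Implicit. Unset Printing Implicit Defensive.

(* Elements of [n] = {1..n} are represented by 'I_n = {0..n-1} (order-preserving shift). *)

Definition Lambda (n : nat) : {set {set 'I_n}} := [set A : {set 'I_n} | #|A| == 3].

(* The stick of a 4-subset F = {i<j<k<l}: (ijk, ijl, ikl, jkl), i.e. F minus
   its largest, second-largest, second-smallest, smallest element.  Given the
   elements listed increasingly as e : nat -> 'I_n, the p-th stick entry
   (p = 0..3) is F minus e (3 - p). *)
Definition stick_entry (n : nat) (F : {set 'I_n}) (e : nat -> 'I_n) (p : nat)
  : {set 'I_n} := F :\ e (3 - p).

Definition segment_ok (n : nat) (T : {set {set 'I_n}}) (s : nat -> {set 'I_n}) :=
  exists m, m <= 4 /\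
    ((forall p, p < 4 -> (s p \in T) = (p < m)) \/
     (forall p, p < 4 -> (s p \in T) = (4 - m <= p))).

Definition tiling (n : nat) (T : {set {set 'I_n}}) : Prop :=
  T \subset Lambda n /\
  forall i j k l : 'I_n, i < j -> j < k -> k < l ->
    segment_ok T (stick_entry [set i; j; k; l]
                   (fun p => match p with 0 => i | 1 => j | 2 => k | _ => l end)).

Definition compatible (n : nat) (T T' : {set {set 'I_n}}) : Prop :=
  tiling (T :&: T') /\ tiling (T :|: T').

Definition sm (n : nat) (V : finType) (T : V -> {set {set 'I_n}}) : {set {set 'I_n}} :=
  [set t : {set 'I_n} | #|V| < 2 * #|[set v | t \in T v]|].

Definition clique (n : nat) (D : {set {set 'I_n}} -> Prop) : Prop :=
  forall T T', D T -> D T' -> compatible T T'.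

Definition condorcet_superdomain (n : nat) (D : {set {set 'I_n}} -> Prop) : Prop :=
  forall (V : finType) (T : V -> {set {set 'I_n}}),
    odd #|V| -> (forall v, D (T v)) -> tiling (sm T).

From mathcomp Require Import all_boot.
From mathcomp Require Import zify.

Set Implicit Arguments. Unset Strict Implicit. Unset Printing Implicit Defensive.

(* A subset of a stick is an initial or final segment iff it has no gap:
   no p < q < r with s_p, s_r on one side and s_q on the other.  If all the
   voters' tilings are pairwise compatible and s_p, s_r are majority triples,
   then for u voting for s_p but not s_q and w voting for s_r but not s_q the
   union T_u ∪ T_w would have a gap; hence the supporters of s_p or those of
   s_r all support s_q, which is therefore a majority triple.  The same
   argument with intersections and (for |V| odd) majorities of non-supporters
   rules out the other kind of gap.  Conversely, the majority of T, T' and a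
   third voter ∅ (resp. Λ) is T ∩ T' (resp. T ∪ T'). *)

Definition segment (f : nat -> bool) :=
  exists m, m <= 4 /\
    ((forall p, p < 4 -> f p = (p < m)) \/ (forall p, p < 4 -> f p = (4 - m <= p))).

Definition gap_free (f : nat -> bool) :=
  forall p q r, p < q -> q < r -> r < 4 -> f p = f r -> f q = f p.

Lemma gap_free_segment (f : nat -> bool) : segment f -> gap_free f.
Proof. by move=> [m [_ [Ef|Ef]]] p q r pq qr r4; rewrite !Ef; lia. Qed.

Lemma segment_gap_free (f : nat -> bool) : gap_free f -> segment f.
Proof.
move=> gf.
have gf_bits : [&& (f 0 == f 2) ==> (f 1 == f 0), (f 0 == f 3) ==> (f 1 == f 0),
                   (f 0 == f 3) ==> (f 2 == f 0) & (f 1 == f 3) ==> (f 2 == f 1)].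
  by apply/and4P; split; apply/implyP => /eqP;
    [move/(gf 0 1 2) | move/(gf 0 1 3) | move/(gf 0 2 3) | move/(gf 1 2 3)] => ->.
(* Once f 0, .., f 3 are fixed, both gf_bits and the search for m compute. *)
suff : has (fun m => [&& f 0 == (0 < m), f 1 == (1 < m), f 2 == (2 < m) & f 3 == (3 < m)]
                 || [&& f 0 == (4 - m <= 0), f 1 == (4 - m <= 1), f 2 == (4 - m <= 2)
                      & f 3 == (4 - m <= 3)]) (iota 0 5).
  case/hasP=> m; rewrite mem_iota => m4 /orP[] /and4P[/eqP f0 /eqP f1 /eqP f2 /eqP f3];
    exists m; (split; first lia); [left | right]; by case=> [|[|[|[|p]]]].
by move: gf_bits; case: (f 0); case: (f 1); case: (f 2); case: (f 3).
Qed.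

Section Majority.

Variable V : finType.

Lemma subset_or_of_cover (B C D : {set V}) :
  (forall u w, u \in B -> w \in D -> (u \in C) || (w \in C)) ->
  (B \subset C) || (D \subset C).
Proof.
move=> cover; apply/norP=> -[/subsetPn[u uB uC] /subsetPn[w wD wC]].
by move: (cover u w uB wD); rewrite (negbTE uC) (negbTE wC).
Qed.

Lemma majority_of_cover (B C D : {set V}) :
  (forall u w, u \in B -> w \in D -> (u \in C) || (w \in C)) ->
  #|V| < 2 * #|B| -> #|V| < 2 * #|D| -> #|V| < 2 * #|C|.
Proof.
move=> /subset_or_of_cover/orP[] /subset_leq_card le_C majB majD; lia.
Qed.

Lemma odd_majorityC (A : {set V}) :
  odd #|V| -> (#|V| < 2 * #|~: A|) = ~~ (#|V| < 2 * #|A|).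
Proof.
move=> oddV; have := cardsC A; have := odd_double_half #|V|.
rewrite oddV -muln2; set N := #|V|; set h := N./2; lia.
Qed.

End Majority.

Lemma gap_free_sm (n : nat) (V : finType) (T : V -> {set {set 'I_n}})
    (s : nat -> {set 'I_n}) :
  odd #|V| ->
  (forall u w, gap_free (fun p => s p \in T u :|: T w)) ->
  (forall u w, gap_free (fun p => s p \in T u :&: T w)) ->
  gap_free (fun p => s p \in sm T).
Proof.
move=> oddV gapU gapI p q r pq qr r4; rewrite !inE.
pose A x := [set v | s x \in T v]; rewrite -/(A p) -/(A q) -/(A r).
have coverA u w : u \in A p -> w \in A r -> (u \in A q) || (w \in A q).
  rewrite !inE => up wr; have := gapU u w p q r pq qr r4.
  by rewrite !inE up wr orbT => /(_ erefl).
have coverAC u w : u \in ~: A p -> w \in ~: A r -> (u \in ~: A q) || (w \in ~: A q).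
  rewrite !inE => /negbTE up /negbTE wr; have := gapI u w p q r pq qr r4.
  by rewrite !inE up wr andbF -negb_and => /(_ erefl) ->.
case majp: (_ < _) => /esym majr; first exact: majority_of_cover coverA majp majr.
apply/negbTE; rewrite -odd_majorityC //.
by apply: majority_of_cover coverAC _ _; rewrite odd_majorityC // ?majp ?majr.
Qed.

Lemma sm_subset (n : nat) (V : finType) (T : V -> {set {set 'I_n}}) (L : {set {set 'I_n}}) :
  (forall v, T v \subset L) -> sm T \subset L.
Proof.
move=> TL; apply/subsetP=> t; rewrite inE => maj.
have /set0Pn[v] : [set v | t \in T v] != set0.
  by apply: contraTneq maj => ->; rewrite cards0.
by rewrite inE; apply/subsetP.
Qed.

Lemma tiling_sm (n : nat) (V : finType) (T : V -> {set {set 'I_n}}) :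
  odd #|V| -> (forall u w, compatible (T u) (T w)) -> tiling (sm T).
Proof.
move=> oddV compat; split.
  by apply: sm_subset => v; have [_ [+ _]] := compat v v; rewrite setUid.
move=> i j k l ij jk kl; apply: segment_gap_free.
apply: gap_free_sm => // u w; apply: gap_free_segment.
  by have [_ [_ sticksU]] := compat u w; apply: sticksU.
by have [[_ sticksI] _] := compat u w; apply: sticksI.
Qed.

Definition three_voters (n : nat) (A B C : {set {set 'I_n}}) (v : 'I_3) :=
  nth set0 [:: A; B; C] v.

Lemma in_sm_three_voters (n : nat) (A B C : {set {set 'I_n}}) t :
  (t \in sm (three_voters A B C)) =
  [|| (t \in A) && (t \in B), (t \in A) && (t \in C) | (t \in B) && (t \in C)].
Proof.
rewrite inE card_ord -sum1_card big_mkcond !big_ord_recl big_ord0 !inE /=.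
by case: (t \in A); case: (t \in B); case: (t \in C).
Qed.

Lemma sm_three_voters_set0 (n : nat) (A B : {set {set 'I_n}}) :
  sm (three_voters A B set0) = A :&: B.
Proof. by apply/setP=> t; rewrite in_sm_three_voters !inE !andbF !orbF. Qed.

Lemma sm_three_voters_sup (n : nat) (A B C : {set {set 'I_n}}) :
  A :|: B \subset C -> sm (three_voters A B C) = A :|: B.
Proof.
move=> /subsetP ABC; apply/setP=> t; rewrite in_sm_three_voters in_setU.
have := ABC t; rewrite in_setU.
by case: (t \in A); case: (t \in B); case: (t \in C) => // /(_ isT).
Qed.

Theorem proposition2 (n : nat) (D : {set {set 'I_n}} -> Prop) :
  3 <= n ->
  (forall T, D T -> tiling T) ->
  D set0 -> D (Lambda n) ->
  (clique D <-> condorcet_superdomain D).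
Proof.
move=> _ DT D0 DL; split.
  by move=> cliqueD V T oddV DTv; apply: tiling_sm => // u w; apply: cliqueD.
move=> condD T T' DT1 DT2.
have D3 C : D C -> tiling (sm (three_voters T T' C)).
  by move=> DC; apply: condD; [rewrite card_ord | case=> [[|[|[|]]]]].
have [TL _] := DT _ DT1; have [T'L _] := DT _ DT2.
split; first by rewrite -sm_three_voters_set0; apply: D3.
by rewrite -(sm_three_voters_sup (C := Lambda n)) ?subUset ?TL //; apply: D3.
Qed.
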